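(* Let $q$ be a prime power, let $k\geq 2$ and $r>4$ be integers, and let $n=rk$. Let $\gamma\in\mathbb{F}_{q^n}$ be a root of an irreducible polynomial of degree $r$ over $\mathbb{F}_{q^k}$. For each pair $(\tau,\delta)\in\mathbb{F}_{q^k}^*\times\mathbb{F}_{q^k}^*$ let $$U_{\tau,\delta}=\{u+(u^q+u)\tau\gamma+(u^q+u)\delta\gamma^2\mid u\in\mathbb{F}_{q^k}\},$$ and list these $(q^k-1)^2$ subspaces as $U_1,\dots,U_{(q^k-1)^2}$. Then the code $$\mathcal{C}=\bigcup_{i=1}^{(q^k-1)^2}\{\alpha U_i\mid\alpha\in\mathbb{F}_{q^n}^*\}$$ is a cyclic constant dimension subspace code with cardinality $(q^k-1)^2\frac{q^n-1}{q-1}$ and minimum distance $2k-2$.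
   Context: $\mathbb{F}_{q^n}$ is viewed as an $n$-dimensional vector space over $\mathbb{F}_q$. For $\mathbb{F}_q$-subspaces $U,V$ of $\mathbb{F}_{q^n}$, the subspace distance is $d(U,V)=\dim U+\dim V-2\dim(U\cap V)$. A subspace code is a nonempty set of $\mathbb{F}_q$-subspaces of $\mathbb{F}_{q^n}$; it is constant dimension if all its members have the same dimension; its minimum distance is $\min\{d(U,V)\mid U,V\in\mathcal{C},U\neq V\}$. The orbit of $U$ is $\{\alpha U\mid\alpha\in\mathbb{F}_{q^n}^*\}$, and a code is cyclic if it is a union of orbits. *)

From HB Require Import structures.
From mathcomp Require Import all_boot all_order all_algebra all_field.
Set Implicit Arguments. Unset Strict Implicit. Unset Printing Implicit Defensive.
Import GRing.Theory.
Local Open Scope ring_scope.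

(* Setting: F is a finite field of order q (q = #|F|, a prime power);
   L is a finite extension of F (so L = F_{q^n}, n = \dim {:L});
   F_q-subspaces of L are the elements of {vspace L}. *)

Definition subspace_dist (F : fieldType) (L : vectType F) (U V : {vspace L}) : nat :=
  (\dim U + \dim V - 2 * \dim (U :&: V))%N.

Definition vmul (F : fieldType) (L : fieldExtType F) (a : L) (U : {vspace L})
  : {vspace L} := (amull a @: U)%VS.

Definition orbit_of (F : fieldType) (L : fieldExtType F) (U V : {vspace L}) : Prop :=
  exists2 a : L, a != 0 & V = vmul a U.

Definition code_nonempty (F : fieldType) (L : vectType F) (C : {vspace L} -> Prop) :=
  exists V, C V.

Definition constant_dimension (F : fieldType) (L : vectType F) (C : {vspace L} -> Prop) :=
  exists d : nat, forall V, C V -> \dim V = d.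

Definition cyclic_code (F : fieldType) (L : fieldExtType F) (C : {vspace L} -> Prop) :=
  exists S : {vspace L} -> Prop, forall V, C V <-> exists2 U, S U & orbit_of U V.

Definition code_card (F : fieldType) (L : vectType F) (C : {vspace L} -> Prop) (N : nat) :=
  exists s : seq {vspace L}, [/\ uniq s, size s = N & forall V, (V \in s) <-> C V].

Definition min_distance (F : fieldType) (L : vectType F) (C : {vspace L} -> Prop) (d : nat) :=
  (exists U V, [/\ C U, C V, U != V & subspace_dist U V = d]) /\
  (forall U V, C U -> C V -> U != V -> (d <= subspace_dist U V)%N).

(* U_{tau,delta} = { u + (u^q+u) tau gamma + (u^q+u) delta gamma^2 | u in K },
   where q = #|F|.  The map is F-linear, so linfun gives exactly it. *)
Definition Utd (F : finFieldType) (L : fieldExtType F) (K : {vspace L})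
  (gamma tau delta : L) : {vspace L} :=
  (linfun (fun u : L => u + (u ^+ #|F| + u) * tau * gamma
                          + (u ^+ #|F| + u) * delta * gamma ^+ 2) @: K)%VS.

Definition code3p6 (F : finFieldType) (L : fieldExtType F) (K : {vspace L})
  (gamma : L) (V : {vspace L}) : Prop :=
  exists tau delta : L,
    [/\ tau \in K, tau != 0, delta \in K, delta != 0 & orbit_of (Utd K gamma tau delta) V].

From HB Require Import structures.
From mathcomp Require Import all_boot all_order all_algebra all_fingroup all_solvable all_field.
From mathcomp Require Import ring.
Set Implicit Arguments. Unset Strict Implicit. Unset Printing Implicit Defensive.
Import GRing.Theory.
Local Open Scope ring_scope.

(* The map theta(u) = u + (u^q + u)(t g + d g^2) is F_q-linear, and injective on
   K = F_{q^k} because 1, g, ..., g^4 are K-linearly independent (g has degree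
   r >= 5 over K); so every codeword has dimension k.  If a U_{t,d} and
   b U_{t',d'} share two vectors a theta(u_i) = b theta'(v_i) with u_1, u_2
   independent over F_q, then theta(u_1) theta'(v_2) = theta(u_2) theta'(v_1);
   the coefficients of 1 and g^4 force v_i = c u_i with c in F_q, and then those
   of g and g^2 force (t, d) = (t', d') and a = c b.  Hence distinct codewords
   meet in dimension at most 1, and a U_{t,d} = b U_{t',d'} exactly when
   (t, d) = (t', d') and a / b is in F_q^*, which gives the count.  Two
   codewords sharing a nonzero vector show that 2k - 2 is attained. *)

Lemma size_undup_count_const (T : eqType) (s : seq T) m :
  {in s, forall x, count_mem x s = m} -> size s = (size (undup s) * m)%N.
Proof.
move=> cnt; rewrite -(perm_size (perm_count_undup s)) size_flatten /shape -map_comp.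
have /eq_in_map -> : {in undup s, size \o (fun x => nseq (count_mem x s) x) =1 fun=> m}.
  by move=> x; rewrite mem_undup /= size_nseq => /cnt.
by elim: (undup s) => //= x t ->; rewrite mulSn.
Qed.

Lemma count_enum (T : finType) (A : {pred T}) (a : pred T) :
  count a (enum A) = #|[pred x in A | a x]|.
Proof.
rewrite cardE /enum_mem size_filter count_filter.
by apply: eq_count => x; rewrite !inE andbC.
Qed.

Section Frobenius.
Variables (F : finFieldType) (L : fieldExtType F).
Local Notation q := #|F|.

Lemma card_pchar_nat : [pchar L].-nat q.
Proof.
have [p _ pF] := finPcharP F.
have /abelem_pgroup := fin_ring_pchar_abelem pF; rewrite /pgroup cardsT => /sub_in_pnat.
by apply=> x _ /eqP ->; rewrite (pchar_lalg L).
Qed.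

Lemma frobD (x y : L) : (x + y) ^+ q = x ^+ q + y ^+ q.
Proof. exact: exprDn_pchar card_pchar_nat. Qed.

Lemma frobZ (c : F) (x : L) : (c *: x) ^+ q = c *: x ^+ q.
Proof. by rewrite -[c *: x]mulr_algl -[RHS]mulr_algl exprMn -in_algE -rmorphXn /= expf_card. Qed.

Lemma frob_fixed (x : L) : (x ^+ q == x) = (x \in 1%VS).
Proof. by rewrite (Fermat's_little_theorem 1%AS) /= dimv1 expn1. Qed.

Lemma frob_fixed_scalar (x : L) : x ^+ q = x -> exists c : F, x = c%:A.
Proof. by move/eqP; rewrite frob_fixed => /vlineP[c ->]; exists c. Qed.

Lemma frob_dependent (u1 u2 : L) :
  u1 != 0 -> u1 ^+ q * u2 = u1 * u2 ^+ q -> exists c : F, u2 = c *: u1.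
Proof.
move=> u1_0 u12; have [|c cE] := @frob_fixed_scalar (u2 / u1); last first.
  by exists c; rewrite -mulr_algl -cE mulfVK.
rewrite expr_div_n; apply: (canLR (mulfK (expf_neq0 q u1_0))).
by apply: (mulfI u1_0); rewrite mulrCA -u12; field.
Qed.

End Frobenius.

Section AdjoinDegree.
Variables (F0 : fieldType) (L : fieldExtType F0) (K : {subfield L}) (g : L).

Lemma adjoin_degree_irreducible_root (p : {poly subvs_of K}) r :
  irreducible_poly p -> size p = r.+1 -> root (map_poly vsval p) g ->
  adjoin_degree K g = r.
Proof.
move=> [_ irr_p] size_p pg0.
have pK : map_poly vsval p \is a polyOver K by apply/polyOver_subvs; exists p.
have [m def_m] := polyOver_subvs (minPolyOver K g).
have m_dvd_p : m %| p by rewrite -(dvdp_map vsval) -def_m minPoly_dvdp.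
have size_m : size m = (adjoin_degree K g).+1 by rewrite -size_minPoly def_m size_map_poly.
have m_gt1 : size m != 1%N.
  by rewrite size_m eqSS -lt0n adjoin_degreeE divn_gt0 ?adim_gt0 ?dimvS ?subv_adjoin.
by have /eqp_size := irr_p m m_gt1 m_dvd_p; rewrite size_m size_p => -[].
Qed.

Lemma polyOver_root_eq0 (p : {poly L}) :
  p \is a polyOver K -> (size p <= adjoin_degree K g)%N -> root p g -> p = 0.
Proof.
by move=> pK size_p /eqP pg0; rewrite -(Fadjoin_poly_unique pK size_p pg0) linear0.
Qed.

Lemma powers5_free c0 c1 c2 c3 c4 :
  (4 < adjoin_degree K g)%N ->
  c0 \in K -> c1 \in K -> c2 \in K -> c3 \in K -> c4 \in K ->
  c0 + c1 * g + c2 * g ^+ 2 + c3 * g ^+ 3 + c4 * g ^+ 4 = 0 ->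
  [/\ c0 = 0, c1 = 0, c2 = 0, c3 = 0 & c4 = 0].
Proof.
move=> deg_g c0K c1K c2K c3K c4K sum0; set s := [:: c0; c1; c2; c3; c4].
pose p := \poly_(i < 5) s`_i.
have pK : p \is a polyOver K.
  apply/polyOverP => i; rewrite coef_poly; case: ifP => _; last exact: mem0v.
  by case: i => [|[|[|[|[|i]]]]] //=; rewrite nth_nil mem0v.
have /polyOver_root_eq0 p0 : root p g.
  apply/eqP; rewrite -[RHS]sum0 horner_poly !big_ord_recl big_ord0 /= /bump /=; ring.
have {p0 pK}s0 i : s`_i = 0.
  have := congr1 (coefp i) (p0 pK (leq_trans (size_poly _ _) deg_g)).
  rewrite /= coef0 coef_poly; case: ltnP => // i_ge5 _; exact: nth_default.
by split; [exact: (s0 0%N) | exact: (s0 1%N) | exact: (s0 2%N) | exact: (s0 3%N) | exact: (s0 4%N)].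
Qed.

End AdjoinDegree.

Section ScaledSubspace.
Variables (F0 : fieldType) (L : fieldExtType F0).

Lemma mem_vmulP (a w : L) (U : {vspace L}) :
  reflect (exists2 u, u \in U & w = a * u) (w \in vmul a U).
Proof. by apply: (iffP memv_imgP) => -[u uU ->]; exists u; rewrite ?lfunE. Qed.

Lemma dim_vmul (a : L) (U : {vspace L}) : a != 0 -> \dim (vmul a U) = \dim U.
Proof.
move=> a0; apply/limg_dim_eq/eqP; rewrite -subv0; apply/subvP => x.
by rewrite memv_cap memv_ker lfunE mulf_eq0 (negbTE a0) memv0 => /andP[].
Qed.

Lemma vmul_scalar (c : F0) (a : L) (U : {vspace L}) :
  c != 0 -> vmul (c%:A * a) U = vmul a U.
Proof.
move=> c0; apply/vspaceP => w; apply/mem_vmulP/mem_vmulP => -[u uU ->].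
  by exists (c *: u); rewrite ?memvZ // mulr_algl -scalerAl scalerAr.
by exists (c^-1 *: u); rewrite ?memvZ // mulr_algl -scalerAl -scalerAr scalerA divff ?scale1r.
Qed.

End ScaledSubspace.

Section UtdMap.
Variables (F : finFieldType) (L : fieldExtType F).
Local Notation q := #|F|.

Definition utd_map (t d g u : L) : L :=
  u + (u ^+ q + u) * t * g + (u ^+ q + u) * d * g ^+ 2.

Lemma utd_map_is_linear t d g : linear (utd_map t d g).
Proof.
move=> c x y; rewrite /utd_map frobD frobZ.
rewrite -(mulr_algl c (x ^+ q)) -(mulr_algl c x) -(mulr_algl c (_ + _ + _)); ring.
Qed.

HB.instance Definition _ t d g :=
  GRing.isLinear.Build F L L *:%R (utd_map t d g) (utd_map_is_linear t d g).

Lemma UtdE (K : {vspace L}) g t d : Utd K g t d = (linfun (utd_map t d g) @: K)%VS.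
Proof. by []. Qed.

Lemma mem_UtdP (K : {vspace L}) g t d w :
  reflect (exists2 u, u \in K & w = utd_map t d g u) (w \in Utd K g t d).
Proof.
by rewrite UtdE; apply: (iffP memv_imgP) => -[u uK ->]; exists u; rewrite ?lfunE.
Qed.

End UtdMap.

Section NonzeroVectors.
Variables (F : finFieldType) (L : fieldExtType F).
Local Notation T := (finvect_type L).

Definition nonzero_vecs (U : {vspace L}) := [set x : T | (x \in U) && (x != 0)].

Lemma card_nonzero_vecs (U : {vspace L}) : #|nonzero_vecs U| = (#|F| ^ \dim U - 1)%N.
Proof.
rewrite -(card_vspace (U : {vspace T})) [in RHS](cardD1 0) mem0v add1n subn1.
by apply: eq_card => x; rewrite !inE andbC.
Qed.

End NonzeroVectors.

Section UtdCode.
Variables (F : finFieldType) (L : fieldExtType F) (K : {subfield L}) (g : L).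
Hypothesis deg_g : (4 < adjoin_degree K g)%N.
Local Notation q := #|F|.

Lemma utd_map_eq0 t d u :
  t \in K -> d \in K -> u \in K -> (utd_map t d g u == 0) = (u == 0).
Proof.
move=> tK dK uK; apply/eqP/eqP => [u_img0 | ->]; last exact: raddf0.
have aK : u ^+ q + u \in K by rewrite rpredD ?rpredX.
have [] // := powers5_free deg_g uK (rpredM aK tK) (rpredM aK dK) (mem0v K) (mem0v K).
by rewrite -[RHS]u_img0 /utd_map !mul0r !addr0.
Qed.

Lemma dim_Utd t d : t \in K -> d \in K -> \dim (Utd K g t d) = \dim K.
Proof.
move=> tK dK; rewrite UtdE.
apply/limg_dim_eq/eqP; rewrite -subv0; apply/subvP => u.
by rewrite memv_cap memv_ker lfunE memv0 => /andP[uK]; rewrite utd_map_eq0.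
Qed.

Lemma utd_map_cross_eq t d t' d' u1 u2 v1 v2 :
  t \in K -> d \in K -> t' \in K -> d' \in K -> d != 0 -> d' != 0 ->
  u1 \in K -> u2 \in K -> v1 \in K -> v2 \in K ->
  u1 != 0 -> u1 ^+ q * u2 != u1 * u2 ^+ q ->
  utd_map t d g u1 * utd_map t' d' g v2 = utd_map t d g u2 * utd_map t' d' g v1 ->
  exists c : F, v1 = c *: u1 /\ v2 = c *: u2.
Proof.
move=> tK dK t'K d'K d0 d'0 u1K u2K v1K v2K u1_0 u12 cross.
pose a1 := u1 ^+ q + u1; pose a2 := u2 ^+ q + u2.
pose b1 := v1 ^+ q + v1; pose b2 := v2 ^+ q + v2.
pose A := u1 * v2 - u2 * v1; pose B := a1 * v2 - a2 * v1.
pose C := u1 * b2 - u2 * b1; pose E := a1 * b2 - a2 * b1.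
(* With w = t g + d g^2, w' = t' g + d' g^2, the cross difference is A + B w + C w' + E w w'. *)
have [e0 _ _ _ e4] : [/\ A = 0, B * t + C * t' = 0, B * d + C * d' + E * t * t' = 0,
    E * (t * d' + d * t') = 0 & E * (d * d') = 0].
  apply: (powers5_free deg_g);
    rewrite // /A /B /C /E /a1 /a2 /b1 /b2 ?(rpredB, rpredD, rpredM, rpredX) //.
  apply: etrans (_ : _ = utd_map t d g u1 * utd_map t' d' g v2
                         - utd_map t d g u2 * utd_map t' d' g v1) _.
    by rewrite /utd_map; ring.
  by rewrite cross subrr.
pose la := v1 / u1.
have v1E : v1 = la * u1 by rewrite divfK.
have v2E : v2 = la * u2.
  by apply: (mulfI u1_0); move/eqP: e0; rewrite subr_eq0 => /eqP ->; rewrite /la; field.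
clearbody la.
have /frob_fixed_scalar[c laE] : la ^+ q = la.
  have : E * (d * d') = (la - la ^+ q) * (u1 ^+ q * u2 - u1 * u2 ^+ q) * (d * d').
    by rewrite /E /a1 /a2 /b1 /b2 v1E v2E !exprMn; ring.
  rewrite e4 => /esym/eqP; rewrite !mulf_eq0 !subr_eq0 (negbTE u12) (negbTE d0) (negbTE d'0).
  by rewrite !orbF eq_sym => /eqP.
by exists c; rewrite v1E v2E laE !mulr_algl.
Qed.

Lemma utd_map_swap_eq t d t' d' u1 u2 :
  t \in K -> d \in K -> t' \in K -> d' \in K ->
  u1 ^+ q * u2 != u1 * u2 ^+ q ->
  utd_map t d g u1 * utd_map t' d' g u2 = utd_map t d g u2 * utd_map t' d' g u1 ->
  t = t' /\ d = d'.
Proof.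
move=> tK dK t'K d'K u12 cross.
have : utd_map t d g u1 * utd_map t' d' g u2 - utd_map t d g u2 * utd_map t' d' g u1
       = (u1 * u2 ^+ q - u1 ^+ q * u2) * ((t' - t) * g + (d' - d) * g ^+ 2).
  by rewrite /utd_map; ring.
rewrite cross subrr => /esym/eqP; rewrite mulf_eq0 subr_eq0 eq_sym (negbTE u12) /=.
move=> /eqP sum0.
have := powers5_free deg_g (mem0v K) (rpredB t'K tK) (rpredB d'K dK) (mem0v K) (mem0v K).
rewrite !mul0r !addr0 add0r => /(_ sum0)[_ /eqP tt' /eqP dd' _ _].
by split; apply/eqP; rewrite eq_sym -subr_eq0.
Qed.

Lemma vmul_Utd_common_indep t d t' d' a b u1 u2 v1 v2 :
  t \in K -> d \in K -> t' \in K -> d' \in K -> d != 0 -> d' != 0 ->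
  a != 0 -> b != 0 -> u1 \in K -> u2 \in K -> v1 \in K -> v2 \in K ->
  u1 != 0 -> u1 ^+ q * u2 != u1 * u2 ^+ q ->
  a * utd_map t d g u1 = b * utd_map t' d' g v1 ->
  a * utd_map t d g u2 = b * utd_map t' d' g v2 ->
  [/\ t = t', d = d' & exists c : F, a = c%:A * b].
Proof.
move=> tK dK t'K d'K d0 d'0 a0 b0 u1K u2K v1K v2K u1_0 u12 e1 e2.
have cross : utd_map t d g u1 * utd_map t' d' g v2 = utd_map t d g u2 * utd_map t' d' g v1.
  apply: (mulfI (mulf_neq0 a0 b0)).
  by rewrite [LHS]mulrACA [RHS]mulrACA e1 e2 mulrC.
have [c [v1E v2E]] := utd_map_cross_eq tK dK t'K d'K d0 d'0 u1K u2K v1K v2K u1_0 u12 cross.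
move: e1 cross; rewrite {}v1E {}v2E !linearZ /= => e1 cross.
have th1_0 : utd_map t d g u1 != 0 by rewrite utd_map_eq0.
have c0 : c != 0.
  by apply: contra_neq (mulf_neq0 a0 th1_0); rewrite e1 => ->; rewrite scale0r mulr0.
have [tt' dd'] : t = t' /\ d = d'.
  apply: (utd_map_swap_eq tK dK t'K d'K u12); apply: (scalerI c0).
  by rewrite !scalerAr.
split => //; exists c; apply: (mulIf th1_0).
by rewrite e1 -tt' -dd' mulr_algl -scalerAl scalerAr.
Qed.

Lemma vmul_Utd_cap_gt1 t d t' d' a b :
  t \in K -> d \in K -> t' \in K -> d' \in K -> d != 0 -> d' != 0 -> a != 0 -> b != 0 ->
  (1 < \dim (vmul a (Utd K g t d) :&: vmul b (Utd K g t' d')))%N ->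
  [/\ t = t', d = d' & exists c : F, a = c%:A * b].
Proof.
move=> tK dK t'K d'K d0 d'0 a0 b0; set W := (_ :&: _)%VS => W_gt1.
have w1_0 : vpick W != 0 by rewrite vpick0; apply: contraTneq W_gt1 => ->; rewrite dimv0.
have [w2 w2W w2_line] : exists2 w2, w2 \in W & w2 \notin <[vpick W]>%VS.
  by apply/subvPn; apply: contraTN W_gt1 => /dimvS; rewrite dim_vline w1_0 -leqNgt.
move: (memv_pick W) w1_0 w2W w2_line; rewrite !memv_cap.
move: (vpick W) => w1 /andP[/mem_vmulP[_ /mem_UtdP[u1 u1K ->] ->]].
move=> /mem_vmulP[_ /mem_UtdP[v1 v1K ->] e1] w1_0.
case/andP=> /mem_vmulP[_ /mem_UtdP[u2 u2K ->] ->] /mem_vmulP[_ /mem_UtdP[v2 v2K ->] e2] w2_line.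
have u1_0 : u1 != 0 by apply: contra_neq w1_0 => ->; rewrite raddf0 mulr0.
apply: (vmul_Utd_common_indep tK dK t'K d'K d0 d'0 a0 b0 u1K u2K v1K v2K u1_0 _ e1 e2).
apply: contraNneq w2_line => /(frob_dependent u1_0)[c ->].
by rewrite linearZ /= -scalerAr memvZ ?memv_line.
Qed.

Local Notation C := (code3p6 K g).

Lemma code_vmul_Utd t d a :
  t \in K -> t != 0 -> d \in K -> d != 0 -> a != 0 -> C (vmul a (Utd K g t d)).
Proof. by move=> tK t0 dK d0 a0; exists t, d; split => //; exists a. Qed.

Lemma code_dim V : C V -> \dim V = \dim K.
Proof. by case=> t [d [tK _ dK _ [a a0 ->]]]; rewrite dim_vmul // dim_Utd. Qed.

Hypothesis dimK_gt1 : (1 < \dim K)%N.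

Lemma eq_vmul_Utd t d t' d' a b :
  t \in K -> d \in K -> t' \in K -> d' \in K -> d != 0 -> d' != 0 -> a != 0 -> b != 0 ->
  vmul a (Utd K g t d) = vmul b (Utd K g t' d') ->
  [/\ t = t', d = d' & exists c : F, a = c%:A * b].
Proof.
move=> tK dK t'K d'K d0 d'0 a0 b0 eqUV; apply: vmul_Utd_cap_gt1 => //.
by rewrite eqUV capvv dim_vmul // dim_Utd.
Qed.

Lemma code_cap_le1 U V : C U -> C V -> U != V -> (\dim (U :&: V) <= 1)%N.
Proof.
case=> t [d [tK _ dK d0 [a a0 ->]]] [t' [d' [t'K _ d'K d'0 [b b0 ->]]]].
rewrite leqNgt; apply: contra => /vmul_Utd_cap_gt1[] // <- <- [c ac].
have c0 : c != 0 by apply: contraNneq a0 => c0; rewrite ac c0 scale0r mul0r.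
by rewrite ac vmul_scalar.
Qed.

Lemma code_dist_ge U V : C U -> C V -> U != V -> (2 * \dim K - 2 <= subspace_dist U V)%N.
Proof.
move=> CU CV UV; rewrite /subspace_dist (code_dim CU) (code_dim CV) addnn -mul2n.
by apply: leq_sub2l; exact: leq_mul (leqnn 2) (code_cap_le1 CU CV UV).
Qed.

Lemma code_dist_common U V w : C U -> C V -> U != V -> w != 0 -> w \in U -> w \in V ->
  subspace_dist U V = (2 * \dim K - 2)%N.
Proof.
move=> CU CV UV w0 wU wV.
have : (\dim <[w]> <= \dim (U :&: V))%N by apply/dimvS; rewrite -memvE memv_cap wU wV.
rewrite dim_vline w0 => cap_ge1.
have /eqP cap1 : \dim (U :&: V) == 1%N by rewrite eqn_leq code_cap_le1.
by rewrite /subspace_dist (code_dim CU) (code_dim CV) cap1 addnn -mul2n muln1.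
Qed.

Local Notation T := (finvect_type L).

Let params :=
  setX (setX (nonzero_vecs (L := L) K) (nonzero_vecs (L := L) K)) (nonzero_vecs (L := L) fullv).
Let word (i : T * T * T) := vmul (i.2 : L) (Utd K g i.1.1 i.1.2).

Lemma word_fiber i0 : i0 \in params ->
  [set i in params | word i == word i0] = [set (i0.1, c%:A * i0.2 : T) | c in [set~ 0]].
Proof.
case: i0 => [[t d] a]; rewrite !inE /= => /andP[/andP[/andP[tK t0] /andP[dK d0]] /andP[_ a0]].
apply/setP => -[[t' d'] a']; rewrite !inE /word /=; apply/idP/imsetP => [|[c]].
  case/andP=> /andP[/andP[/andP[t'K t'0] /andP[d'K d'0]] /andP[_ a'0]] /eqP.
  case/eq_vmul_Utd => // -> -> [c a'E]; exists c; last by rewrite a'E.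
  by rewrite !inE; apply: contraNneq a'0 => c0; rewrite a'E c0 scale0r mul0r.
rewrite !inE => c0 [-> -> ->]; rewrite vmul_scalar // eqxx andbT tK t0 dK d0 memvf /=.
by rewrite mulf_neq0 // scaler_eq0 oner_eq0 orbF.
Qed.

Lemma code_card_Utd :
  code_card C (((q ^ \dim K - 1) ^ 2 * (q ^ \dim {:L} - 1)) %/ (q - 1)).
Proof.
pose s := [seq word i | i <- enum params].
have size_s : size s = ((q ^ \dim K - 1) ^ 2 * (q ^ \dim {:L} - 1))%N.
  by rewrite size_map -cardE !cardsX !card_nonzero_vecs mulnn.
have count_s : {in s, forall V, count_mem V s = (q - 1)%N}.
  move=> V /mapP[i0]; rewrite mem_enum => Pi0 ->; rewrite count_map count_enum.
  transitivity #|[set i in params | word i == word i0]|; first by apply: eq_card => i; rewrite !inE.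
  rewrite word_fiber // card_imset ?cardsC1 ?subn1 // => c c' /pair_equal_spec[_].
  case: i0 Pi0 => [[t d] a]; rewrite !inE => /andP[_ /andP[_ a0]] /(mulIf a0).
  exact: (fmorph_inj (GRing.in_alg L)).
exists (undup s); split; first exact: undup_uniq.
  by rewrite -size_s (size_undup_count_const count_s) mulnK // subn_gt0 finNzRing_gt1.
move=> V; rewrite mem_undup; split.
  case/mapP=> -[[t d] a]; rewrite mem_enum !inE /= => /andP[/andP[/andP[tK t0] /andP[dK d0]]].
  by case/andP=> _ a0 ->; apply: code_vmul_Utd.
case=> t [d [tK t0 dK d0 [a a0 ->]]]; apply/mapP; exists (t, d, a) => //.
by rewrite mem_enum !inE /= tK t0 dK d0 memvf a0.
Qed.

Lemma code_dist_attained t d t' d' a b u v :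
  t \in K -> t != 0 -> d \in K -> d != 0 -> t' \in K -> t' != 0 -> d' \in K -> d' != 0 ->
  a != 0 -> b != 0 -> u \in K -> v \in K -> u != 0 ->
  a * utd_map t d g u = b * utd_map t' d' g v ->
  ~ [/\ t = t', d = d' & exists c : F, a = c%:A * b] ->
  exists U V, [/\ C U, C V, U != V & subspace_dist U V = (2 * \dim K - 2)%N].
Proof.
move=> tK t0 dK d0 t'K t'0 d'K d'0 a0 b0 uK vK u0 common not_equiv.
exists (vmul a (Utd K g t d)), (vmul b (Utd K g t' d')).
have CU := code_vmul_Utd tK t0 dK d0 a0; have CV := code_vmul_Utd t'K t'0 d'K d'0 b0.
have UV : vmul a (Utd K g t d) != vmul b (Utd K g t' d').
  by apply/eqP => /(eq_vmul_Utd tK dK t'K d'K d0 d'0 a0 b0).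
split=> //; apply: (code_dist_common CU CV UV (w := a * utd_map t d g u)).
- by rewrite mulf_neq0 ?utd_map_eq0.
- by apply/mem_vmulP; exists (utd_map t d g u) => //; apply/mem_UtdP; exists u.
- by apply/mem_vmulP; exists (utd_map t' d' g v) => //; apply/mem_UtdP; exists v.
Qed.

Lemma code_min_distance : min_distance C (2 * \dim K - 2).
Proof.
split; last by move=> U V; exact: code_dist_ge.
have [x xK xF] : exists2 x, x \in K & x \notin 1%VS.
  by apply/subvPn; apply: contraTN dimK_gt1 => /dimvS; rewrite dimv1 -leqNgt.
have x0 : x != 0 by apply: contraNneq xF => ->; exact: mem0v.
have K1 : 1 \in K := mem1v K.
have [char2 | char_not2] := eqVneq (1 + 1 : L) 0.
  apply: (code_dist_attained (a := 1) (b := 1) (u := 1) (v := 1) K1 _ K1 _ K1 _ xK);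
    rewrite ?oner_eq0 //.
    by rewrite /utd_map expr1n char2 !mul0r.
  by case=> _ x1 _; move: xF; rewrite -x1 memv_line.
have [b [bK bF b_tr]] : exists b, [/\ b \in K, b \notin 1%VS & b ^+ q + b != 0].
  have [x_tr|] := eqVneq (x ^+ q + x) 0; last by exists x.
  exists (x + 1); split; first by rewrite rpredD.
    by apply: contra xF => x1F; rewrite -(addrK 1 x) rpredB ?memv_line.
  by rewrite frobD expr1n addrACA x_tr add0r.
have b0 : b != 0 by apply: contraNneq bF => ->; exact: mem0v.
have b_trK : b ^+ q + b \in K by rewrite rpredD ?rpredX.
have b2K : (1 + 1) * b \in K by rewrite rpredM ?rpredD.
apply: (code_dist_attained (a := b) (b := 1) (u := 1) (v := b) b_trK _ b_trK _ b2K _ b2K) => //;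
  rewrite ?mulf_neq0 ?oner_eq0 //.
  by rewrite /utd_map expr1n; ring.
by case=> _ _ [c]; rewrite mulr1 => bE; move: bF; rewrite bE memvZ ?memv_line.
Qed.

End UtdCode.

Unset Implicit Arguments. Set Strict Implicit.

Theorem lemma3p6 (F : finFieldType) (L : fieldExtType F) (k r : nat)
  (K : {subfield L}) (gamma : L) (p : {poly subvs_of K}) :
  (2 <= k)%N -> (4 < r)%N ->
  \dim {:L} = (r * k)%N ->
  \dim K = k ->
  irreducible_poly p -> size p = r.+1 -> root (map_poly vsval p) gamma ->
  let q := #|F| in
  let n := (r * k)%N in
  let C := code3p6 K gamma in
  [/\ code_nonempty C, cyclic_code C, constant_dimension C,
      code_card C (((q ^ k - 1) ^ 2 * (q ^ n - 1)) %/ (q - 1))%N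
    & min_distance C (2 * k - 2)%N].
Proof.
move=> k_gt1 r_gt4 dimL dimK p_irr size_p p_gamma q n C.
have deg_gamma : (4 < adjoin_degree K gamma)%N.
  by rewrite (adjoin_degree_irreducible_root p_irr size_p p_gamma).
have dimK_gt1 : (1 < \dim K)%N by rewrite dimK.
split.
- by exists (vmul 1 (Utd K gamma 1 1)); apply: code_vmul_Utd; rewrite ?mem1v ?oner_eq0.
- exists (fun U => exists t d, [/\ t \in K, t != 0, d \in K, d != 0 & U = Utd K gamma t d]).
  move=> V; split=> [[t [d [tK t0 dK d0 UV]]] | [_ [t [d [tK t0 dK d0 ->]]] UV]].
    by exists (Utd K gamma t d) => //; exists t, d.
  by exists t, d.
- by exists k => V /(code_dim deg_gamma); rewrite dimK.
- by rewrite /n -dimL -dimK; exact: code_card_Utd.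
- by rewrite -dimK; exact: code_min_distance.
Qed.
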